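(* Let $A = A_s + A_i\epsilon\in\mathbb{DR}^{m\times n}$ with $m\ge n$, let $k\le\min(m,n)$, and suppose $A_sP_s = Q_sR_s$, where $P_s\in\mathbb{R}^{n\times n}$ is a permutation matrix, $Q_s\in\mathbb{R}^{m\times k}$ has orthonormal columns, and $R_s = (r_{s_{ij}})\in\mathbb{R}^{k\times n}$ is upper trapezoidal (i.e. $r_{s_{ij}}=0$ for $i>j$) with $r_{s_{jj}}\neq 0$ for $j=1,\dots,k$. Then there exist $Q_i\in\mathbb{R}^{m\times k}$ and $R_i\in\mathbb{R}^{k\times n}$ such that $Q = Q_s + Q_i\epsilon$ satisfies $Q^{\top}Q = I_k$, $R = R_s + R_i\epsilon$ is upper trapezoidal, and $AP_s = QR$, if and only if $$(I_m - Q_sQ_s^{\top})A_iP_s(I_n - R_s^{\dagger}R_s) = O_{m\times n}.$$ In that case one such decomposition is obtained as follows: put $B = Q_s^{\top}A_iP_s = [b_1,\dots,b_n]$, define $P\in\mathbb{R}^{k\times k}$ with zero diagonal, strictly lower triangular part $$p_1(2{:}k) = b_1(2{:}k)/r_{s_{11}},\qquad p_j(j{+}1{:}k) = \Big(b_j(j{+}1{:}k) - \sum_{t=1}^{j-1} r_{s_{tj}}\,p_t(j{+}1{:}k)\Big)\Big/r_{s_{jj}},\quad j=2,\dots,k-1,$$ and $P^{\top}=-P$, and set $$Q_i = (I_m - Q_sQ_s^{\top})A_iP_sR_s^{\dagger} + Q_sP,\qquad R_i = Q_s^{\top}A_iP_s - PR_s.$$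
   Context: A dual number is $a = a_s + a_i\epsilon$ with $a_s,a_i\in\mathbb{R}$, where $\epsilon^2=0$, $\epsilon\neq 0$; $\mathbb{DR}^{m\times n}$ denotes the set of dual matrices $A = A_s + A_i\epsilon$ with $A_s, A_i\in\mathbb{R}^{m\times n}$. Products use $\epsilon^2=0$: $(A_s+A_i\epsilon)(B_s+B_i\epsilon) = A_sB_s + (A_sB_i + A_iB_s)\epsilon$. The transpose is $A^{\top}=A_s^{\top}+A_i^{\top}\epsilon$. A dual matrix is upper trapezoidal if both its standard and infinitesimal parts are upper trapezoidal (zero below the main diagonal). $M^{\dagger}$ denotes the Moore–Penrose pseudoinverse of a real matrix $M$. For a vector $v$, $v(a{:}b)$ is the subvector of entries $a$ through $b$. (In the paper, $A_sP_s=Q_sR_s$ arises from a randomized QR decomposition with column pivoting, but only the stated factorization properties are used.) *)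

From HB Require Import structures.
From mathcomp Require Import all_boot all_order all_algebra.
From mathcomp Require Import reals.
From Stdlib Require Import ClassicalEpsilon.
Set Implicit Arguments. Unset Strict Implicit. Unset Printing Implicit Defensive.
Import Order.TTheory GRing.Theory Num.Theory.
Local Open Scope ring_scope.

Section Defs.
Variable R : realType.

(* Dual matrices A = A_s + A_i eps, represented by the pair of parts. *)
Record dmx (m n : nat) := DMx { dstd : 'M[R]_(m, n); dinf : 'M[R]_(m, n) }.

Definition dmul m n p (A : dmx m n) (B : dmx n p) : dmx m p :=
  DMx (dstd A *m dstd B) (dstd A *m dinf B + dinf A *m dstd B).

Definition dtr m n (A : dmx m n) : dmx n m := DMx (dstd A)^T (dinf A)^T.

Definition did n : dmx n n := DMx 1%:M 0.

Definition upper_trap m n (M : 'M[R]_(m, n)) : Prop :=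
  forall (i : 'I_m) (j : 'I_n), (j < i)%N -> M i j = 0.

Definition dupper_trap m n (A : dmx m n) : Prop :=
  upper_trap (dstd A) /\ upper_trap (dinf A).

Definition penrose m n (M : 'M[R]_(m, n)) (X : 'M[R]_(n, m)) : Prop :=
  [/\ M *m X *m M = M, X *m M *m X = X,
      (M *m X)^T = M *m X & (X *m M)^T = X *m M].

Definition pinv m n (M : 'M[R]_(m, n)) : 'M[R]_(n, m) :=
  match excluded_middle_informative (exists X, penrose M X) with
  | left H => proj1_sig (constructive_indefinite_description _ H)
  | right _ => 0
  end.

(* entry of a matrix at natural-number indices (0 outside the range) *)
Definition mxe m n (M : 'M[R]_(m, n)) (i j : nat) : R :=
  match (insub i : option 'I_m), (insub j : option 'I_n) with
  | Some i', Some j' => M i' j'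
  | _, _ => 0
  end.

(* pcols B Rs j t i = p_t(i) (0-based) for columns t < j, as given by the
   recursion  p_t(i) = (b_t(i) - sum_{u<t} r_{u t} p_u(i)) / r_{t t}  for i > t,
   and 0 for i <= t. *)
Fixpoint pcols k n (B Rs : 'M[R]_(k, n)) (j : nat) : nat -> nat -> R :=
  match j with
  | 0 => fun _ _ => 0
  | j'.+1 =>
      let f := pcols B Rs j' in
      fun t i =>
        if (t < j')%N then f t i
        else if t == j' then
          (if (j' < i)%N then
             (mxe B i j' - \sum_(u < j') mxe Rs u j' * f u i) / mxe Rs j' j'
           else 0)
        else 0
  end.

Definition Pmat k n (B Rs : 'M[R]_(k, n)) : 'M[R]_k :=
  \matrix_(i < k, j < k)
    (if (j < i)%N then pcols B Rs k j i
     else if (i < j)%N then - pcols B Rs k i j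
     else 0).

End Defs.

From HB Require Import structures.
From mathcomp Require Import all_boot all_order all_algebra.
From mathcomp Require Import reals.
From Stdlib Require Import ClassicalEpsilon.
Set Implicit Arguments. Unset Strict Implicit.
Import Order.TTheory GRing.Theory Num.Theory.
Local Open Scope ring_scope.

(* Put C := A_i P_s and X := R_s^+.  The eps-part of A P_s = Q R reads
   C = Q_s R_i + Q_i R_s; the projectors I - Q_s Q_s^T and I - X R_s annihilate
   Q_s on the left and R_s on the right, which gives necessity.  Conversely, for
   the proposed Q_i, R_i and any P one has the identity
   Q_s R_i + Q_i R_s = C - (I - Q_s Q_s^T) C (I - X R_s).  Moreover Q_s^T Q_i = P,
   so Q is orthonormal as soon as P is skew, and the recursion defining P makes
   P R_s agree with B = Q_s^T C strictly below the diagonal, so that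
   R_i = B - P R_s is upper trapezoidal. *)

Section CorrectionAlgebra.
Variables (R : pzRingType) (m n k : nat).
Implicit Types (Qs : 'M[R]_(m, k)) (W : 'M[R]_(k, m)) (Rs : 'M[R]_(k, n)).

Lemma mulmx_qr_correction Qs W Rs (C : 'M_(m, n)) (X : 'M_(n, k)) (P : 'M_k) :
  Qs *m (W *m C - P *m Rs) + ((1%:M - Qs *m W) *m C *m X + Qs *m P) *m Rs
  = C - (1%:M - Qs *m W) *m C *m (1%:M - X *m Rs).
Proof.
rewrite mulmxBr mulmxDl !mulmxBl !mulmxBr !mul1mx !mulmx1 !mulmxA.
by rewrite [X in _ + X]addrC subrKA -[in RHS]addrA -[in RHS]opprD subKr addrCA.
Qed.

Lemma mulmx_correction_left Qs W (C : 'M_(m, n)) (X : 'M_(n, k)) (P : 'M_k) :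
  W *m Qs = 1%:M -> W *m ((1%:M - Qs *m W) *m C *m X + Qs *m P) = P.
Proof.
move=> WQ; rewrite mulmxDr !mulmxA WQ mul1mx mulmxBr mulmx1 mulmxA WQ mul1mx.
by rewrite subrr !mul0mx add0r.
Qed.

Lemma residual_mulmx_qr_eq0 Qs W Rs (X : 'M_(n, k)) (Qi : 'M_(m, k)) (Ri : 'M_(k, n)) :
  W *m Qs = 1%:M -> Rs *m X *m Rs = Rs ->
  (1%:M - Qs *m W) *m (Qs *m Ri + Qi *m Rs) *m (1%:M - X *m Rs) = 0.
Proof.
move=> WQ RXR; have projQ : (1%:M - Qs *m W) *m Qs = 0.
  by rewrite mulmxBl mul1mx -mulmxA WQ mulmx1 subrr.
have RX1 : Rs *m (1%:M - X *m Rs) = 0 by rewrite mulmxBr mulmxA RXR mulmx1 subrr.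
by rewrite [(1%:M - _) *m (_ + _)]mulmxDr mulmxA projQ mul0mx add0r -!mulmxA RX1 !mulmx0.
Qed.

End CorrectionAlgebra.

Section RecursiveSkewFactor.
Variables (R : realType) (k n : nat) (B Rs : 'M[R]_(k, n)).

Lemma mxeE m p (M : 'M[R]_(m, p)) (i : 'I_m) (j : 'I_p) : mxe M i j = M i j.
Proof. by rewrite /mxe !valK. Qed.

Lemma mxe_upper_trap m p (M : 'M[R]_(m, p)) (i j : nat) :
  upper_trap M -> (j < i)%N -> mxe M i j = 0.
Proof.
move=> Mtrap ji; rewrite /mxe.
case: insubP => [i' _ ei|//]; case: insubP => [j' _ ej|//].
by apply: Mtrap; rewrite ei ej.
Qed.

Lemma pcols_stable j t i : (t < j)%N -> pcols B Rs j t i = pcols B Rs t.+1 t i.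
Proof.
elim: j => [//|j IHj] tj /=; case: ltnP => [tj'|jt]; first by rewrite IHj.
have -> : t = j by apply/eqP; rewrite eqn_leq jt -ltnS tj.
by rewrite /= ltnn eqxx.
Qed.

Lemma pcols_rec t i :
  pcols B Rs t.+1 t i = if (t < i)%N then
    (mxe B i t - \sum_(u < t) mxe Rs u t * pcols B Rs u.+1 u i) / mxe Rs t t
  else 0.
Proof.
rewrite /= ltnn eqxx; case: ifP => // _; congr ((_ - _) / _).
by apply: eq_bigr => u _; rewrite pcols_stable.
Qed.

Lemma mxe_Pmat_lower i t :
  (t < i)%N -> (i < k)%N -> mxe (Pmat B Rs) i t = pcols B Rs t.+1 t i.
Proof.
move=> ti ik; have tk : (t < k)%N := ltn_trans ti ik.
rewrite -(@pcols_stable k t i tk) (mxeE (Pmat B Rs) (Ordinal ik) (Ordinal tk)).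
by rewrite mxE /= ti.
Qed.

Lemma Pmat_skew : (Pmat B Rs)^T = - Pmat B Rs.
Proof.
apply/matrixP => i j; rewrite !mxE.
by case: ltngtP => _; rewrite ?opprK ?oppr0.
Qed.

(* Only the columns [t <= j] of [Pmat] contribute, since [Rs] is upper
   trapezoidal; column [j] was defined to make the sum come out as [b_j]. *)
Lemma mxe_mul_Pmat_lower i j : upper_trap Rs -> (j < i)%N -> (i < k)%N ->
  mxe Rs j j != 0 ->
  \sum_(t < k) mxe (Pmat B Rs) i t * mxe Rs t j = mxe B i j.
Proof.
move=> Rtrap ji ik Rjj.
have jk : (j.+1 <= k)%N := ltn_trans ji ik.
rewrite -(big_mkord xpredT (fun t => mxe (Pmat B Rs) i t * mxe Rs t j)).
rewrite (big_cat_nat _ jk) //=.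
have -> : \sum_(j.+1 <= t < k) mxe (Pmat B Rs) i t * mxe Rs t j = 0.
  rewrite big_nat_cond big1 // => t /andP[/andP[jt _] _].
  by rewrite (mxe_upper_trap Rtrap jt) mulr0.
rewrite addr0 big_nat_recr //= big_mkord mxe_Pmat_lower // pcols_rec ji.
under eq_bigr => t _ do rewrite mulrC mxe_Pmat_lower ?(ltn_trans (ltn_ord t) ji) //.
by rewrite divfK // addrC subrK.
Qed.

Lemma upper_trap_sub_mul_Pmat : upper_trap Rs ->
  (forall (i : 'I_k) (j : 'I_n), i = j :> nat -> Rs i j != 0) ->
  upper_trap (B - Pmat B Rs *m Rs).
Proof.
move=> Rtrap Rdiag i j ji; have jk : (j < k)%N := ltn_trans ji (ltn_ord i).
have Rjj : mxe Rs j j != 0 by rewrite (mxeE Rs (Ordinal jk)); exact: Rdiag.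
rewrite !mxE -(mxeE B) -(mxe_mul_Pmat_lower Rtrap ji (ltn_ord i) Rjj).
by under eq_bigr => t _ do rewrite !mxeE; rewrite subrr.
Qed.

End RecursiveSkewFactor.

Lemma mulmx_tr_eq0 (F : realDomainType) m p (M : 'M[F]_(m, p)) :
  M *m M^T = 0 -> M = 0.
Proof.
move=> MMt0; apply/matrixP => i j; rewrite mxE.
have /eqP := congr1 (fun N : 'M_m => N i i) MMt0.
rewrite !mxE psumr_eq0 => [/allP/(_ j (mem_index_enum j))|l _]; rewrite mxE -expr2.
  by rewrite sqrf_eq0 => /eqP.
exact: sqr_ge0.
Qed.

Lemma row_free_gram_unit (F : realFieldType) m p (M : 'M[F]_(m, p)) :
  row_free M -> M *m M^T \in unitmx.
Proof.
move=> Mfree; rewrite -row_free_unit; apply: inj_row_free => u uMMt0.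
apply/eqP; rewrite -(mulmx_free_eq0 _ Mfree); apply/eqP/mulmx_tr_eq0.
by rewrite trmx_mul mulmxA -(mulmxA u) uMMt0 mul0mx.
Qed.

Section FullRowRankPseudoInverse.
Variables (R : realType) (k n : nat).

Lemma upper_trap_row_free (M : 'M[R]_(k, n)) : (k <= n)%N -> upper_trap M ->
  (forall (i : 'I_k) (j : 'I_n), i = j :> nat -> M i j != 0) -> row_free M.
Proof.
move=> kn Mtrap Mdiag; apply: inj_row_free => u uM0.
suff u0 l (t : 'I_k) : t = l :> nat -> u 0 t = 0.
  by apply/rowP => t; rewrite (u0 t) // mxE.
elim/ltn_ind: l t => l IHl t tl.
have tn : (t < n)%N := leq_trans (ltn_ord t) kn.
have := congr1 (fun v : 'rV_n => v 0 (Ordinal tn)) uM0.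
rewrite !mxE (bigD1 t) //= big1 ?addr0 => [|s st].
  by move/eqP; rewrite mulf_eq0 (negbTE (Mdiag t (Ordinal tn) erefl)) orbF => /eqP.
case: (ltngtP s t) => [lts|gts|/val_inj eqs]; last by rewrite eqs eqxx in st.
  by rewrite (IHl s) ?mul0r // -tl.
by rewrite Mtrap ?mulr0.
Qed.

Lemma penrose_row_free (M : 'M[R]_(k, n)) :
  row_free M -> penrose M (M^T *m invmx (M *m M^T)).
Proof.
move=> Mfree; have MMtu := row_free_gram_unit Mfree.
have MX1 : M *m (M^T *m invmx (M *m M^T)) = 1%:M by rewrite mulmxA mulmxV.
split; first by rewrite MX1 mul1mx.
- by rewrite -mulmxA MX1 mulmx1.
- by rewrite MX1 trmx1.
by rewrite !trmx_mul trmxK trmx_inv trmx_mul trmxK mulmxA.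
Qed.

Lemma pinvP (M : 'M[R]_(k, n)) : (exists X, penrose M X) -> penrose M (pinv M).
Proof.
rewrite /pinv => Mpen; case: excluded_middle_informative => // Mpen'.
exact: proj2_sig (constructive_indefinite_description _ Mpen').
Qed.

Lemma penrose_pinv_row_free (M : 'M[R]_(k, n)) : row_free M -> penrose M (pinv M).
Proof. by move=> Mfree; apply: pinvP; eexists; exact: penrose_row_free. Qed.

End FullRowRankPseudoInverse.

Section DualOrthonormal.
Variables (R : realType) (m n k : nat).

Lemma dmul_dtr_did (Qs Qi : 'M[R]_(m, k)) :
  Qs^T *m Qs = 1%:M -> Qs^T *m Qi + Qi^T *m Qs = 0 ->
  dmul (dtr (DMx Qs Qi)) (DMx Qs Qi) = did R k.
Proof. by move=> QtQ QtQi; rewrite /dmul /dtr /did /= QtQ QtQi. Qed.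

Lemma dorthonormal_correction (Qs : 'M[R]_(m, k)) (C : 'M_(m, n)) (X : 'M_(n, k))
    (P : 'M_k) :
  Qs^T *m Qs = 1%:M -> P^T = - P ->
  let Q := DMx Qs ((1%:M - Qs *m Qs^T) *m C *m X + Qs *m P) in
  dmul (dtr Q) Q = did R k.
Proof.
move=> QtQ Pskew Q; apply: dmul_dtr_did => //.
have QtQi := mulmx_correction_left C X P QtQ.
by rewrite QtQi -[X in _ + X]trmxK trmx_mul trmxK QtQi Pskew subrr.
Qed.

End DualOrthonormal.

Unset Implicit Arguments.

Theorem theorem3p3 (R : realType) (m n k : nat)
  (As Ai : 'M[R]_(m, n)) (Ps : 'M[R]_n) (Qs : 'M[R]_(m, k)) (Rs : 'M[R]_(k, n)) :
  (n <= m)%N -> (k <= minn m n)%N ->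
  is_perm_mx Ps ->
  Qs^T *m Qs = 1%:M ->
  upper_trap Rs ->
  (forall (i : 'I_k) (j : 'I_n), nat_of_ord i = nat_of_ord j -> Rs i j != 0) ->
  As *m Ps = Qs *m Rs ->
  let A := DMx As Ai in
  let cond := fun Qi Ri =>
    let Q := DMx Qs Qi in
    let Rd := DMx Rs Ri in
    [/\ dmul (dtr Q) Q = did R k, dupper_trap Rd &
        dmul A (DMx Ps 0) = dmul Q Rd] in
  ((exists (Qi : 'M[R]_(m, k)) (Ri : 'M[R]_(k, n)), cond Qi Ri) <->
   (1%:M - Qs *m Qs^T) *m Ai *m Ps *m (1%:M - pinv Rs *m Rs) = 0)
  /\
  ((1%:M - Qs *m Qs^T) *m Ai *m Ps *m (1%:M - pinv Rs *m Rs) = 0 ->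
   let B := Qs^T *m Ai *m Ps in
   let P := Pmat B Rs in
   cond ((1%:M - Qs *m Qs^T) *m Ai *m Ps *m pinv Rs + Qs *m P)
        (Qs^T *m Ai *m Ps - P *m Rs)).
Proof.
move=> _ km _ QtQ Rtrap Rdiag AsQR A cond.
have kn : (k <= n)%N := leq_trans km (geq_minr m n).
have [RXR _ _ _] := penrose_pinv_row_free (upper_trap_row_free kn Rtrap Rdiag).
rewrite -![_ *m Ai *m Ps]mulmxA.
have sufficient : (1%:M - Qs *m Qs^T) *m (Ai *m Ps) *m (1%:M - pinv Rs *m Rs) = 0 ->
    let P := Pmat (Qs^T *m (Ai *m Ps)) Rs in
    cond ((1%:M - Qs *m Qs^T) *m (Ai *m Ps) *m pinv Rs + Qs *m P)
         (Qs^T *m (Ai *m Ps) - P *m Rs).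
  move=> residual0 P; split.
  - exact: dorthonormal_correction QtQ (Pmat_skew _ _).
  - by split; [exact: Rtrap | exact: upper_trap_sub_mul_Pmat].
  by rewrite /dmul /= AsQR mulmx0 add0r mulmx_qr_correction residual0 subr0.
split=> //; split=> [[Qi [Ri [_ _ /(congr1 (@dinf R m n))]]]|residual0].
  by rewrite /= mulmx0 add0r => ->; exact: residual_mulmx_qr_eq0.
by do 2!eexists; exact: sufficient.
Qed.
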